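(* Let $M\in\Lambda$ be a closed $\lambda$-term and $N\in\Lambda$. The following two conditions are equivalent, for every natural number $n$: (1) $M\rightarrow_v^n N$ and $N$ is in $\rightarrow_v$-normal form; (2) $[\![M]\!]\rightarrow^n t$ in $\Phi$ for some term $t$ that is in normal form in $\Phi$ and satisfies $\langle\!\langle t\rangle\!\rangle=N$.
   Context: $\lambda$-terms are $M::=x\mid \lambda x.M\mid MN$, with $x$ ranging over a denumerable set $\Upsilon$ of variables equipped with a fixed total order; $\Lambda$ is the set of all terms. $FV(M)$ is the sequence (without repetitions, ordered by the fixed order on $\Upsilon$) of free variables of $M$; $M$ is closed if this sequence is empty. Values are $V::=x\mid\lambda x.M$. Weak call-by-value reduction $\rightarrow_v$ is the smallest relation such that $(\lambda x.M)V\rightarrow_v M\{V/x\}$ for every value $V$, and such that $M\rightarrow_v N$ implies $ML\rightarrow_v NL$ and $LM\rightarrow_v LN$ (no reduction under $\lambda$). $\rightarrow_v^n$ denotes $n$ steps. The constructor rewrite system $\Phi$ has signature: a binary function symbol $\mathbf{app}$ and, for every $M\in\Lambda$ and $x\in\Upsilon$, a constructor symbol $c_{x,M}$ whose arity is the length of $FV(\lambda x.M)$. Constructor terms are the closed terms built from constructors only. To every $M\in\Lambda$ associate a (possibly open) term $[\![M]\!]$: $[\![x]\!]=x$; $[\![\lambda x.M]\!]=c_{x,M}(x_1,\dots,x_n)$ where $FV(\lambda x.M)=x_1,\dots,x_n$; $[\![MN]\!]=\mathbf{app}([\![M]\!],[\![N]\!])$. The rules of $\Phi$ are all $\mathbf{app}(c_{x,M}(x_1,\dots,x_n),x)\rightarrow[\![M]\!]$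 with $FV(\lambda x.M)=x_1,\dots,x_n$. Rewriting is call-by-value: $t\rightarrow u$ if $u$ is obtained from $t$ by replacing a subterm $l\sigma$ by $r\sigma$, where $l\rightarrow r$ is a rule and the substitution $\sigma$ maps variables to constructor terms. A term is in normal form if no rewrite step applies. To every term $t$ of $\Phi$ associate a $\lambda$-term $\langle\!\langle t\rangle\!\rangle$: $\langle\!\langle x\rangle\!\rangle=x$; $\langle\!\langle \mathbf{app}(u,v)\rangle\!\rangle=\langle\!\langle u\rangle\!\rangle\langle\!\langle v\rangle\!\rangle$; $\langle\!\langle c_{x,M}(t_1,\dots,t_n)\rangle\!\rangle=(\lambda x.M)\{\langle\!\langle t_1\rangle\!\rangle/x_1,\dots,\langle\!\langle t_n\rangle\!\rangle/x_n\}$ where $FV(\lambda x.M)=x_1,\dots,x_n$. *)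

From mathcomp Require Import all_boot.
Set Implicit Arguments. Unset Strict Implicit. Unset Printing Implicit Defensive.

Inductive term : Type :=
| Var : nat -> term
| Lam : nat -> term -> term
| App : term -> term -> term.

Fixpoint fvs (M : term) : seq nat :=
  match M with
  | Var x => [:: x]
  | Lam x M => [seq y <- fvs M | y != x]
  | App M N => fvs M ++ fvs N
  end.

Definition FV (M : term) : seq nat := sort leq (undup (fvs M)).

Definition closed_term (M : term) : Prop := FV M = [::].

(* simultaneous capture-avoiding substitution; a bound variable is renamed
   (to a fresh one) only when capture would otherwise occur *)
Fixpoint subst (s : nat -> term) (M : term) : term :=
  match M with
  | Var x => s x
  | App M N => App (subst s M) (subst s N)
  | Lam y M' =>
      let avoid := flatten [seq fvs (s w) | w <- FV (Lam y M')] in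
      let z := if y \in avoid then (foldr maxn 0 avoid).+1 else y in
      Lam z (subst (fun w => if w == y then Var z else s w) M')
  end.

Definition subst1 (M : term) (x : nat) (V : term) : term :=
  subst (fun w => if w == x then V else Var w) M.

Definition is_value (M : term) : bool :=
  match M with Var _ | Lam _ _ => true | App _ _ => false end.

Inductive vstep : term -> term -> Prop :=
| vstep_beta x M V : is_value V -> vstep (App (Lam x M) V) (subst1 M x V)
| vstep_appL M N L : vstep M N -> vstep (App M L) (App N L)
| vstep_appR M N L : vstep M N -> vstep (App L M) (App L N).

Definition vnormal (M : term) : Prop := ~ exists N, vstep M N.

Inductive nsteps (A : Type) (R : A -> A -> Prop) : nat -> A -> A -> Prop :=
| nsteps0 a : nsteps R 0 a a
| nstepsS n a b c : R a b -> nsteps R n b c -> nsteps R n.+1 a c.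

(* PCon x M args is the constructor c_{x,M} applied to args *)
Inductive pterm : Type :=
| PVar : nat -> pterm
| PApp : pterm -> pterm -> pterm
| PCon : nat -> term -> seq pterm -> pterm.

Fixpoint pwf (t : pterm) : bool :=
  match t with
  | PVar _ => true
  | PApp u v => pwf u && pwf v
  | PCon x M args => (size args == size (FV (Lam x M))) && all pwf args
  end.

Fixpoint is_cons (t : pterm) : bool :=
  match t with
  | PVar _ => false
  | PApp _ _ => false
  | PCon x M args => (size args == size (FV (Lam x M))) && all is_cons args
  end.

Fixpoint psubst (s : nat -> pterm) (t : pterm) : pterm :=
  match t with
  | PVar x => s x
  | PApp u v => PApp (psubst s u) (psubst s v)
  | PCon x M args => PCon x M (map (psubst s) args)
  end.

Fixpoint enc (M : term) : pterm :=
  match M with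
  | Var x => PVar x
  | Lam x M' => PCon x M' (map PVar (FV (Lam x M')))
  | App M N => PApp (enc M) (enc N)
  end.

(* rule instance app(c_{x,M}(x_1..x_n), x) sigma -> [[M]] sigma, where
   sigma maps x_i to us_i and x to v (constructor terms) *)
Inductive pstep : pterm -> pterm -> Prop :=
| pstep_rule x M us v :
    size us = size (FV (Lam x M)) -> all is_cons us -> is_cons v ->
    pstep (PApp (PCon x M us) v)
          (psubst (fun y => if y == x then v
                            else nth (PVar y) us (index y (FV (Lam x M))))
                  (enc M))
| pstep_appL u u' v : pstep u u' -> pstep (PApp u v) (PApp u' v)
| pstep_appR u v v' : pstep v v' -> pstep (PApp u v) (PApp u v')
| pstep_con x M l1 u u' l2 :
    pstep u u' -> pstep (PCon x M (l1 ++ u :: l2)) (PCon x M (l1 ++ u' :: l2)).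

Definition pnormal (t : pterm) : Prop := ~ exists u, pstep t u.

Fixpoint dec (t : pterm) : term :=
  match t with
  | PVar x => Var x
  | PApp u v => App (dec u) (dec v)
  | PCon x M args =>
      subst (fun y => nth (Var y) (map dec args) (index y (FV (Lam x M))))
            (Lam x M)
  end.

From mathcomp Require Import all_boot.
From Stdlib Require List.

Set Implicit Arguments.
Unset Strict Implicit.
Unset Printing Implicit Defensive.

(* The terms of Phi reachable from [[M]], M closed, are application trees whose
   leaves are constructor terms, and constructor terms decode to closed values.
   Hence decoding needs no renaming, and a rule instance app(c_{x,M}(us), v)
   decodes to a beta_v-redex whose contractum is the decoded right-hand side.
   Conversely every beta_v-redex of a decoded tree comes from a rule instance,
   since the only values among decoded trees are decoded constructor terms.
   So decoding is a step-by-step bisimulation, and it matches normal forms. *)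

Section Simulation.

Variables (A B : Type) (R : A -> A -> Prop) (S : B -> B -> Prop).
Variables (f : A -> B) (P : pred A).

Lemma nsteps_sim :
  (forall a a', R a a' -> P a -> S (f a) (f a') /\ P a') ->
  forall n a a', nsteps R n a a' -> P a -> nsteps S n (f a) (f a') /\ P a'.
Proof.
move=> simR n a a'; elim=> [b|k b c d Rbc _ IH] Pb; first by split; [constructor|].
have [Sbc Pc] := simR b c Rbc Pb; have [Scd Pd] := IH Pc.
by split=> //; apply: nstepsS Sbc Scd.
Qed.

Lemma nsteps_lift :
  (forall a y, P a -> S (f a) y -> exists a', [/\ R a a', P a' & f a' = y]) ->
  forall n b y, nsteps S n b y -> forall a, P a -> f a = b ->
  exists a', [/\ nsteps R n a a', P a' & f a' = y].
Proof.
move=> liftS n b y; elim=> [c|k c d e Scd _ IH] a Pa fa.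
  by exists a; split=> //; constructor.
rewrite -fa in Scd; have [a1 [Ra1 Pa1 fa1]] := liftS a d Pa Scd.
have [a' [Ra' Pa' fa']] := IH a1 Pa1 fa1.
by exists a'; split=> //; apply: nstepsS Ra1 Ra'.
Qed.

End Simulation.

Fixpoint nsubst (s : nat -> term) (M : term) : term :=
  match M with
  | Var x => s x
  | App M N => App (nsubst s M) (nsubst s N)
  | Lam y M' => Lam y (nsubst (fun w => if w == y then Var y else s w) M')
  end.

Lemma mem_FV M w : (w \in FV M) = (w \in fvs M).
Proof. by rewrite /FV mem_sort mem_undup. Qed.

Lemma eq_nsubst M s s' : {in fvs M, s =1 s'} -> nsubst s M = nsubst s' M.
Proof.
elim: M s s' => [x|y M IH|M IHM N IHN] s s' ss' /=.
- by apply: ss'; rewrite inE.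
- congr Lam; apply: IH => w Mw; case: eqP => // /eqP wy.
  by apply: ss'; rewrite mem_filter wy.
- by rewrite (IHM s s') ?(IHN s s') // => w Mw; apply: ss'; rewrite mem_cat Mw ?orbT.
Qed.

Lemma nsubst_id M s : {in fvs M, s =1 Var} -> nsubst s M = M.
Proof.
elim: M s => [x|y M IH|M IHM N IHN] s sV /=.
- by apply: sV; rewrite inE.
- congr Lam; apply: IH => w Mw; case: eqP => [->//|/eqP wy].
  by apply: sV; rewrite mem_filter wy.
- by rewrite IHM ?IHN // => w Mw; apply: sV; rewrite mem_cat Mw ?orbT.
Qed.

Lemma nsubst_closed N s : fvs N = [::] -> nsubst s N = N.
Proof. by move=> N0; apply: nsubst_id => w; rewrite N0. Qed.

Lemma fvs_nsubst M s w :
  w \in fvs (nsubst s M) -> exists2 v, v \in fvs M & w \in fvs (s v).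
Proof.
elim: M s => [x|y M IH|M IHM N IHN] s /=.
- by move=> xw; exists x; rewrite ?inE.
- rewrite mem_filter => /andP [wy /IH [v Mv]] /=.
  case: ifP => [_|vy]; first by rewrite inE (negbTE wy).
  by exists v; rewrite ?mem_filter ?vy.
- rewrite mem_cat => /orP [/IHM|/IHN] [v Mv sv]; exists v => //;
  by rewrite mem_cat Mv ?orbT.
Qed.

Lemma fvs_nsubst_nil M s :
  {in fvs M, forall w, fvs (s w) = [::]} -> fvs (nsubst s M) = [::].
Proof.
move=> s0; case E: (fvs (nsubst s M)) => [|a l] //.
have : a \in fvs (nsubst s M) by rewrite E inE eqxx.
by case/fvs_nsubst => v /s0 ->.
Qed.

Lemma subst_nsubst M s :
  {in fvs M, forall w, fvs (s w) = [::] \/ s w = Var w} -> subst s M = nsubst s M.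
Proof.
elim: M s => [x|y M IH|M IHM N IHN] s sM //=.
- have /negbTE -> : y \notin flatten [seq fvs (s w) | w <- FV (Lam y M)].
    apply/negP => /flattenP [l /mapP [w]]; rewrite mem_FV => Mw -> yw.
    case: (sM w Mw) => sw; first by rewrite sw in yw.
    move: yw Mw; rewrite sw inE => /eqP <-.
    by rewrite mem_filter eqxx.
  congr Lam; apply: IH => w Mw; case: ifP => [/eqP ->|wy]; first by right.
  by apply: sM; rewrite mem_filter wy.
- by rewrite IHM ?IHN // => w Mw; apply: sM; rewrite mem_cat Mw ?orbT.
Qed.

Lemma nsubst_comp M s1 s2 s :
  {in fvs M, forall w, (fvs (s1 w) = [::] /\ s w = s1 w) \/
                       (s1 w = Var w /\ s w = s2 w)} ->
  nsubst s2 (nsubst s1 M) = nsubst s M.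
Proof.
elim: M s1 s2 s => [x|y M IH|M IHM N IHN] s1 s2 s sM /=.
- by case: (sM x (mem_head _ _)) => [[s1x ->]|[-> ->]] //; apply: nsubst_closed.
- congr Lam; apply: IH => w Mw; case: ifP => [/eqP ->|wy]; first by right.
  by apply: sM; rewrite mem_filter wy.
- by rewrite (IHM _ _ s) ?(IHN _ _ s) // => w Mw; apply: sM; rewrite mem_cat Mw ?orbT.
Qed.

Lemma In_nth (T : Type) (l : seq T) d i : i < size l -> List.In (nth d l i) l.
Proof. by elim: l i => //= a l IH [|i] /=; auto. Qed.

Lemma allInP (T : Type) (a : pred T) l :
  reflect (forall t, List.In t l -> a t) (all a l).
Proof.
elim: l => [|b l IH] /=; first by left.
apply: (iffP andP) => [[ab /IH al] t [<-|/al]//|al].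
by split; [apply: al; left | apply/IH => t lt; apply: al; right].
Qed.

Section PtermInd.

Variable P : pterm -> Prop.
Hypothesis PVarP : forall x, P (PVar x).
Hypothesis PAppP : forall u v, P u -> P v -> P (PApp u v).
Hypothesis PConP : forall x M us, (forall u, List.In u us -> P u) -> P (PCon x M us).

Fixpoint pterm_nested_ind (t : pterm) : P t :=
  match t with
  | PVar x => PVarP x
  | PApp u v => @PAppP u v (pterm_nested_ind u) (pterm_nested_ind v)
  | PCon x M us => @PConP x M us
      ((fix args (us : seq pterm) : forall u, List.In u us -> P u :=
         match us with
         | [::] => fun u absurd => False_ind _ absurd
         | u0 :: us' => fun u in_u =>
             match in_u with
             | or_introl e => eq_ind u0 P (pterm_nested_ind u0) u e
             | or_intror in_u' => args us' u in_u'
             end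
         end) us)
  end.

End PtermInd.

Lemma index_arg_lt x M us w :
  is_cons (PCon x M us) -> w \in fvs (Lam x M) -> index w (FV (Lam x M)) < size us.
Proof. by rewrite -mem_FV -index_mem /= => /andP [/eqP ->]. Qed.

Lemma is_cons_arg x M us w :
  is_cons (PCon x M us) -> w \in fvs (Lam x M) ->
  is_cons (nth (PVar w) us (index w (FV (Lam x M)))).
Proof.
move=> cons_t /(index_arg_lt cons_t) lt; move: cons_t => /= /andP [_].
by move/(all_nthP (PVar w)); apply.
Qed.

Lemma cons_pwf t : is_cons t -> pwf t.
Proof.
elim/pterm_nested_ind: t => // x M us IH /= /andP [-> /allInP cons_us] /=.
by apply/allInP => u u_us; apply: IH (cons_us u u_us).
Qed.

Lemma cons_pnormal t : is_cons t -> pnormal t.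
Proof.
move=> cons_t [t' tt']; elim: tt' cons_t => // x M l1 u u' l2 _ IH /= /andP [_].
by rewrite all_cat /= => /and3P [_ /IH].
Qed.

Fixpoint app_cons (t : pterm) : bool :=
  match t with
  | PVar _ => false
  | PApp u v => app_cons u && app_cons v
  | PCon _ _ _ => is_cons t
  end.

Lemma app_cons_pwf t : app_cons t -> pwf t.
Proof.
elim: t => [//|u IHu v IHv /= /andP [/IHu -> /IHv ->] //|x M us].
exact: cons_pwf.
Qed.

Lemma psubst_var_enc M : psubst PVar (enc M) = enc M.
Proof. by elim: M => //= [x M _|M -> N ->]; rewrite -?map_comp. Qed.

Lemma app_cons_psubst_enc M s :
  {in fvs M, forall w, is_cons (s w)} -> app_cons (psubst s (enc M)).
Proof.
elim: M => [x|x M _|M IHM N IHN] s_cons /=.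
- by move: (s_cons x (mem_head _ _)); case: (s x).
- rewrite -map_comp size_map eqxx all_map; apply/allP => w Mw /=.
  by apply: s_cons; rewrite -mem_FV.
- by rewrite IHM ?IHN // => w Mw; apply: s_cons; rewrite mem_cat Mw ?orbT.
Qed.

Lemma app_cons_enc M : closed_term M -> app_cons (enc M).
Proof.
by move=> M0; rewrite -psubst_var_enc; apply: app_cons_psubst_enc => w; rewrite -mem_FV M0.
Qed.

Definition con_env (x : nat) (M : term) (us : seq pterm) (y : nat) : term :=
  nth (Var y) (map dec us) (index y (FV (Lam x M))).

Lemma dec_PCon x M us : dec (PCon x M us) = subst (con_env x M us) (Lam x M).
Proof. by []. Qed.

Lemma nth_index_map (f : nat -> term) s w d :
  w \in s -> nth d (map f s) (index w s) = f w.
Proof. by move=> sw; rewrite (nth_map w) ?index_mem // nth_index. Qed.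

Lemma con_envE x M us w : is_cons (PCon x M us) -> w \in fvs (Lam x M) ->
  con_env x M us w = dec (nth (PVar w) us (index w (FV (Lam x M)))).
Proof.
by move=> cons_t /(index_arg_lt cons_t) lt; rewrite /con_env (nth_map (PVar w)).
Qed.

Lemma fvs_dec_cons t : is_cons t -> fvs (dec t) = [::].
Proof.
elim/pterm_nested_ind: t => // x M us IH cons_t.
have env0 : {in fvs (Lam x M), forall w, fvs (con_env x M us w) = [::]}.
  move=> w Mw; rewrite con_envE //.
  by apply/IH/is_cons_arg => //; apply/In_nth/(index_arg_lt cons_t).
by rewrite dec_PCon subst_nsubst => [|w /env0]; [apply: fvs_nsubst_nil | left].
Qed.

Lemma con_env_closed x M us w : is_cons (PCon x M us) -> w \in fvs (Lam x M) ->
  fvs (con_env x M us w) = [::].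
Proof. by move=> cons_t Mw; rewrite con_envE //; apply/fvs_dec_cons/is_cons_arg. Qed.

Lemma dec_cons x M us : is_cons (PCon x M us) ->
  dec (PCon x M us) =
  Lam x (nsubst (fun w => if w == x then Var x else con_env x M us w) M).
Proof.
by move=> cons_t; rewrite dec_PCon subst_nsubst // => w /(con_env_closed cons_t); left.
Qed.

Lemma dec_cons_value t : is_cons t -> is_value (dec t).
Proof. by case: t => // x M us cons_t; rewrite dec_cons. Qed.

Lemma app_cons_value t : app_cons t -> is_value (dec t) -> is_cons t.
Proof. by case: t. Qed.

Lemma dec_enc M : dec (enc M) = M.
Proof.
elim: M => [//|x M _|M IHM N IHN]; last by rewrite /= IHM IHN.
have env_var : {in fvs (Lam x M), con_env x M (map PVar (FV (Lam x M))) =1 Var}.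
  by move=> w Mw; rewrite /con_env -map_comp nth_index_map ?mem_FV.
by rewrite [enc _]/= dec_PCon subst_nsubst => [|w /env_var]; [apply: nsubst_id | right].
Qed.

Lemma dec_psubst_enc M s : {in fvs M, forall w, is_cons (s w)} ->
  dec (psubst s (enc M)) = nsubst (dec \o s) M.
Proof.
elim: M => [x|x M _|M IHM N IHN] s_cons //.
- have envE : {in fvs (Lam x M), con_env x M (map s (FV (Lam x M))) =1 dec \o s}.
    by move=> w Mw; rewrite /con_env -map_comp nth_index_map ?mem_FV.
  rewrite [psubst _ _]/= -map_comp dec_PCon subst_nsubst => [|w Mw]; last first.
    by left; rewrite envE //; apply/fvs_dec_cons/s_cons.
  exact: eq_nsubst.
- by rewrite /= IHM ?IHN // => w Mw; apply: s_cons; rewrite mem_cat Mw ?orbT.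
Qed.

Definition rule_env (x : nat) (M : term) (us : seq pterm) (v : pterm) (y : nat) :=
  if y == x then v else nth (PVar y) us (index y (FV (Lam x M))).

Lemma rule_env_cons x M us v : is_cons (PCon x M us) -> is_cons v ->
  {in fvs M, forall w, is_cons (rule_env x M us v w)}.
Proof.
move=> cons_t cons_v w Mw; rewrite /rule_env; case: ifP => // wx.
by apply: is_cons_arg; rewrite //= mem_filter wx.
Qed.

Lemma dec_rule_rhs x M us v : is_cons (PCon x M us) -> is_cons v ->
  subst1 (nsubst (fun w => if w == x then Var x else con_env x M us w) M) x (dec v)
  = dec (psubst (rule_env x M us v) (enc M)).
Proof.
move=> cons_t cons_v; rewrite dec_psubst_enc; last exact: rule_env_cons.
rewrite /subst1 subst_nsubst => [|w _]; last first.
  by case: ifP => _; [left; apply: fvs_dec_cons | right].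
apply: nsubst_comp => w Mw; rewrite /rule_env /=.
have [->|wx] := eqVneq w x; first by right.
have Mw' : w \in fvs (Lam x M) by rewrite /= mem_filter wx.
by left; rewrite con_env_closed // con_envE.
Qed.

Lemma pstep_dec t t' :
  pstep t t' -> app_cons t -> vstep (dec t) (dec t') /\ app_cons t'.
Proof.
elim=> [x M us v size_us cons_us cons_v|u u' v _ IH|u v v' _ IH|
         x M l1 u u' l2 uu' _].
- have cons_t : is_cons (PCon x M us) by rewrite /= size_us eqxx cons_us.
  move=> _; split; last exact/app_cons_psubst_enc/rule_env_cons.
  rewrite -[psubst _ _]/(psubst (rule_env x M us v) (enc M)) -dec_rule_rhs //.
  have -> : dec (PApp (PCon x M us) v) = App (dec (PCon x M us)) (dec v) by [].
  by rewrite dec_cons //; apply/vstep_beta/dec_cons_value.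
- move=> /= /andP [/IH [uu' cons_u'] ->].
  by split; [apply: vstep_appL | rewrite cons_u'].
- move=> /= /andP [-> /IH [vv' cons_v']].
  by split; [apply: vstep_appR | rewrite cons_v'].
- by move=> /cons_pnormal; case; exists (PCon x M (l1 ++ u' :: l2)); apply: pstep_con.
Qed.

Lemma vstep_lift t N : app_cons t -> vstep (dec t) N ->
  exists t', [/\ pstep t t', app_cons t' & dec t' = N].
Proof.
elim: t N => [//|u IHu v IHv|x M us] N; last first.
  by move=> cons_t; rewrite dec_cons // => step; inversion step.
move=> /= /andP [cons_u cons_v]; move E: (App (dec u) (dec v)) => L step.
case: step E => [y M' V V_val|M1 N1 L1 step|M1 N1 L1 step] [du dv].
- case: u cons_u du {IHu} => // y' M'' us cons_u.
  rewrite dec_cons // => -[<- <-].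
  have cons_v' : is_cons v by apply: app_cons_value; rewrite ?dv.
  exists (psubst (rule_env y' M'' us v) (enc M'')); split.
  + by move: cons_u => /= /andP [/eqP size_us cons_us]; apply: pstep_rule.
  + exact/app_cons_psubst_enc/rule_env_cons.
  + by rewrite -dec_rule_rhs // dv.
- rewrite -du in step; have [u' [uu' cons_u' du']] := IHu N1 cons_u step.
  exists (PApp u' v).
  by split; rewrite /= ?cons_u' ?cons_v ?du' ?dv //; apply: pstep_appL.
- rewrite -dv in step; have [v' [vv' cons_v' dv']] := IHv N1 cons_v step.
  exists (PApp u v').
  by split; rewrite /= ?cons_u ?cons_v' ?du ?dv' //; apply: pstep_appR.
Qed.

Lemma pnormal_vnormal t : app_cons t -> pnormal t <-> vnormal (dec t).
Proof.
move=> cons_t; split=> [tn [N step]|Nn [t' step]].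
- by have [t' [tt' _ _]] := vstep_lift cons_t step; apply: tn; exists t'.
- by have [step' _] := pstep_dec step cons_t; apply: Nn; exists (dec t').
Qed.

Theorem theorem1 (M N : term) (n : nat) :
  closed_term M ->
  ((nsteps vstep n M N /\ vnormal N) <->
   (exists t : pterm, pwf t /\ nsteps pstep n (enc M) t /\ pnormal t /\ dec t = N)).
Proof.
move=> /app_cons_enc cons_M; split.
- move=> [steps Nn].
  have [t [steps' cons_t tN]] :=
    nsteps_lift vstep_lift steps cons_M (dec_enc M).
  exists t; split; first exact: app_cons_pwf.
  by split=> //; split=> //; apply/(pnormal_vnormal cons_t); rewrite tN.
- move=> [t [_ [steps [tn <-]]]].
  have [steps' cons_t] := nsteps_sim pstep_dec steps cons_M.
  by rewrite dec_enc in steps'; split=> //; apply/(pnormal_vnormal cons_t).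
Qed.
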